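(* For $n\ge3$, the priority lattice $\Pi(n)$ is not distributive.
   Context: $[n]_0=\{0,\dots,n\}$. A priority forest on $[n]_0$ is a rooted forest with vertex set $[n]_0$ whose component trees $T_0,T_1,\dots$ are increasing (each non-root vertex has a larger label than its parent) and satisfy: for $j<k$ every label of $T_j$ is smaller than every label of $T_k$. The priority lattice $\Pi(n)$ is the set of priority forests on $[n]_0$, ordered by $P\le P'$ iff $E(P)\subseteq E(P')$, together with an extra element $\hat1$ greater than all priority forests; it is a lattice. *)

From mathcomp Require Import all_boot.
Set Implicit Arguments. Unset Strict Implicit. Unset Printing Implicit Defensive.

(* Vertex set [n]_0 = {0,...,n} is 'I_n.+1.
   A rooted forest on [n]_0 whose trees are increasing is encoded by its
   parent map: par v = None iff v is a root, par v = Some u means the edge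
   u -> v (u parent of v), and every non-root vertex has a smaller-labelled
   parent.  Such a map has no cycles, so it is exactly an increasing rooted
   forest. *)
Definition vtx (n : nat) := 'I_n.+1.
Definition parent_map (n : nat) := {ffun vtx n -> option (vtx n)}.

Definition increasing n (par : parent_map n) : Prop :=
  forall u v : vtx n, par v = Some u -> (u < v)%N.

Definition adj n (par : parent_map n) : rel (vtx n) :=
  fun u v => (par v == Some u) || (par u == Some v).
Definition same_tree n (par : parent_map n) (x y : vtx n) : bool :=
  connect (adj par) x y.

(* Component trees can be listed T_0, T_1, ... so that for j < k every label
   of T_j is smaller than every label of T_k: i.e. any two distinct
   components are separated, one lying entirely below the other. *)
Definition ordered_components n (par : parent_map n) : Prop :=
  forall x y : vtx n, ~~ same_tree par x y ->
    (forall a b, same_tree par x a -> same_tree par y b -> (a < b)%N) \/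
    (forall a b, same_tree par x a -> same_tree par y b -> (b < a)%N).

Definition priority_forest n (par : parent_map n) : Prop :=
  increasing par /\ ordered_components par.

Definition PForest (n : nat) := {par : parent_map n | priority_forest par}.

Definition edge_sub n (P Q : PForest n) : Prop :=
  forall u v : vtx n, proj1_sig P v = Some u -> proj1_sig Q v = Some u.

Definition Pi (n : nat) := option (PForest n).

Definition Pi_le n (x y : Pi n) : Prop :=
  match x, y with
  | _, None => True
  | None, Some _ => False
  | Some P, Some Q => edge_sub P Q
  end.

Definition is_lub T (le : T -> T -> Prop) (x y j : T) : Prop :=
  le x j /\ le y j /\ forall w, le x w -> le y w -> le j w.
Definition is_glb T (le : T -> T -> Prop) (x y m : T) : Prop :=
  le m x /\ le m y /\ forall w, le w x -> le w y -> le w m.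

Definition distributive_lattice T (le : T -> T -> Prop) : Prop :=
  forall x y z yz lhs xy xz rhs : T,
    is_lub le y z yz -> is_glb le x yz lhs ->
    is_glb le x y xy -> is_glb le x z xz -> is_lub le xy xz rhs ->
    lhs = rhs.

From mathcomp Require Import all_boot.
From mathcomp Require Import zify.
Set Implicit Arguments. Unset Strict Implicit. Unset Printing Implicit Defensive.

(* Take X = {2->3}, Y = {0->1, 0->2} and Z = {1->2}.  Y and Z give vertex 2
   two different parents, so Y v Z is the top and X ^ (Y v Z) = X; but X has
   no edge in common with Y nor with Z, so (X ^ Y) v (X ^ Z) is the edgeless
   forest. *)

Section PriorityLattice.
Variable n : nat.

Lemma ordered_components_of_label (par : parent_map n) (c : vtx n -> nat) :
  {homo c : a b / (a <= b)%N} ->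
  (forall u v, par v = Some u -> c u = c v) ->
  (forall x y, c x = c y -> connect (adj par) x y) ->
  ordered_components par.
Proof.
move=> c_mono c_edge c_conn.
have c_tree x a : same_tree par x a -> c x = c a.
  have closed_c : closed (adj par) [pred z | c z == c x].
    by move=> u v /orP[] /eqP/c_edge E; rewrite !inE E.
  by move=> /(closed_connect closed_c); rewrite !inE eqxx => /esym/eqP.
move=> x y /negP xy_apart.
have [lt_xy|lt_yx|/c_conn //] := ltngtP (c x) (c y).
- by left=> a b /c_tree xa /c_tree yb; rewrite ltnNge; apply/negP => /c_mono; lia.
- by right=> a b /c_tree xa /c_tree yb; rewrite ltnNge; apply/negP => /c_mono; lia.
Qed.

Definition star (r k : nat) : parent_map n :=
  [ffun v : vtx n => if (r < v <= r + k)%N then Some (inord r) else None].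

Lemma star_some r k (u v : vtx n) :
  star r k v = Some u -> (r < v <= r + k)%N /\ u = inord r.
Proof. by rewrite ffunE; case: ifP => // v_child [<-]. Qed.

Lemma star_child r k (v : vtx n) :
  (r < v <= r + k)%N -> star r k v = Some (inord r).
Proof. by move=> v_child; rewrite ffunE v_child. Qed.

Lemma star0 r (v : vtx n) : star r 0 v = None.
Proof. by rewrite ffunE addn0; case: ltnP => // /leq_trans->. Qed.

Lemma star_priority r k : (r + k <= n)%N -> priority_forest (star r k).
Proof.
move=> rk_le_n.
have r_val : nat_of_ord (inord r : vtx n) = r by rewrite inordK //; lia.
split; first by move=> u v /star_some[v_child ->]; rewrite r_val; lia.
(* The tree {r,...,r+k} gets label r; every other vertex is a singleton tree. *)
pose c (v : vtx n) := if (r <= v <= r + k)%N then r else nat_of_ord v.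
have conn_root (z : vtx n) : (r <= z <= r + k)%N ->
    connect (adj (star r k)) (inord r) z /\ connect (adj (star r k)) z (inord r).
  move=> z_in; have [->|z_ne_r] := eqVneq z (inord r); first by rewrite connect0.
  have z_child : star r k z = Some (inord r).
    apply: star_child; suff: nat_of_ord z != r by lia.
    by apply: contra z_ne_r => /eqP z_r; apply/eqP/val_inj; rewrite /= r_val.
  by split; apply: connect1; rewrite /adj z_child eqxx ?orbT.
apply: (@ordered_components_of_label _ c).
- by move=> a b ab; rewrite /c; do 2 case: ifP => //; lia.
- move=> u v /star_some[v_child ->].
  by rewrite /c r_val ifT; [rewrite ifT //|]; lia.
- rewrite /c => x y; case: ifP => x_in; case: ifP => y_in.
  + by move=> _; apply: connect_trans (proj2 (conn_root x x_in)) (proj1 (conn_root y y_in)).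
  + by move=> xy; move: y_in; rewrite -xy; lia.
  + by move=> xy; move: x_in; rewrite xy; lia.
  + by move=> /val_inj->; apply: connect0.
Qed.

Definition star_forest r k (rk_le_n : (r + k <= n)%N) : PForest n :=
  exist _ (star r k) (star_priority rk_le_n).

Definition edgeless_forest : PForest n := star_forest (leq0n n : (0 + 0 <= n)%N).

Lemma Pi_le_refl (x : Pi n) : Pi_le x x.
Proof. by case: x => // P u v. Qed.

Lemma edgeless_forest_bottom (w : Pi n) : Pi_le (Some edgeless_forest) w.
Proof. by case: w => // W u v; rewrite /= star0. Qed.

Lemma is_lub_refl (x : Pi n) : is_lub (@Pi_le n) x x x.
Proof. by split; [|split]; [apply: Pi_le_refl..|]. Qed.

Lemma is_glb_top (x : Pi n) : is_glb (@Pi_le n) x None x.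
Proof. by split; [apply: Pi_le_refl|split=> [|//]; case: x]. Qed.

Lemma is_lub_parent_conflict (P Q : PForest n) (v u1 u2 : vtx n) :
  proj1_sig P v = Some u1 -> proj1_sig Q v = Some u2 -> u1 != u2 ->
  is_lub (@Pi_le n) (Some P) (Some Q) None.
Proof.
move=> Pv Qv u12; split=> //; split=> //; case=> // W PW QW.
by have := PW _ _ Pv; rewrite (QW _ _ Qv) => -[u21]; rewrite u21 eqxx in u12.
Qed.

Lemma is_glb_no_common_edge (P Q : PForest n) :
  (forall u v, proj1_sig P v = Some u -> proj1_sig Q v <> Some u) ->
  is_glb (@Pi_le n) (Some P) (Some Q) (Some edgeless_forest).
Proof.
move=> no_common; split; first exact: edgeless_forest_bottom.
split; first exact: edgeless_forest_bottom.
case=> // W PW QW u v Wv.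
by have := no_common u v (PW _ _ Wv); rewrite (QW _ _ Wv).
Qed.

Lemma stars_no_common_edge r1 k1 r2 k2 (u v : vtx n) :
  (r1 + k1 <= r2)%N || (r2 + k2 <= r1)%N ->
  star r1 k1 v = Some u -> star r2 k2 v <> Some u.
Proof. by move=> apart /star_some[v1 _] /star_some[v2 _]; lia. Qed.

End PriorityLattice.

Theorem lemma5p5 (n : nat) : (3 <= n)%N -> ~ distributive_lattice (@Pi_le n).
Proof.
move=> n_ge3 distr.
have [X_ok Y_ok Z_ok] : [/\ 2 + 1 <= n, 0 + 2 <= n & 1 + 1 <= n]%N by split; lia.
pose X := star_forest X_ok; pose Y := star_forest Y_ok; pose Z := star_forest Z_ok.
have vtxK i : (i <= 3)%N -> nat_of_ord (inord i : vtx n) = i.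
  by move=> i_le3; rewrite inordK //; lia.
have X_ne_bottom : Some X <> Some (edgeless_forest n).
  have X_edge : proj1_sig X (inord 3) = Some (inord 2).
    by apply: star_child; rewrite vtxK.
  by move=> [X_bot]; move: X_edge; rewrite /X /= X_bot star0.
apply: X_ne_bottom.
apply: (distr (Some X) (Some Y) (Some Z) None (Some X) _ _ (Some (edgeless_forest n))).
- apply: (@is_lub_parent_conflict _ Y Z (inord 2) (inord 0) (inord 1)).
  + by apply: star_child; rewrite vtxK.
  + by apply: star_child; rewrite vtxK.
  + by apply/eqP => /(congr1 val); rewrite /= !vtxK.
- exact: is_glb_top.
- by apply: is_glb_no_common_edge => u v; apply: stars_no_common_edge.
- by apply: is_glb_no_common_edge => u v; apply: stars_no_common_edge.
- exact: is_lub_refl.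
Qed.
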